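(* Let $\mathbf L=\{L_1,\dots,L_n\}$ be a finite multiset of positive rationals, $k\in\mathbb N_{>0}$, $I\subseteq[1..n]$, and $f_l,f_u:I\to\mathbb N_{>0}$ such that (i) for every $i\in I$: $f_l(i)=1$ or $L_i/(f_l(i)-1)$ is infeasible; (ii) for every $i\in I$: $L_i/f_u(i)$ is feasible; (iii) for every $i'\in[1..n]\setminus I$: $L_{i'}$ is feasible but $L_{i'}\neq l^\star$. Then $l^\star\in\mathcal C(I,f_l,f_u)$.
   Context: For $l\in\mathbb Q_{>0}$: $m(l)=\sum_{i=1}^n\lfloor L_i/l\rfloor$, $c(l)=\sum_{i=1}^n(\lceil L_i/l\rceil-1)$; $l$ is feasible if $m(l)\ge k$. The optimal cut length $l^\star$ is the feasible length minimizing $c$ among feasible lengths (it exists, is unique, and equals the largest feasible length). For $I\subseteq[1..n]$ and $f_l:I\to\mathbb N$, $f_u:I\to\mathbb N\cup\{\infty\}$, the candidate multiset is $\mathcal C(I,f_l,f_u)=\biguplus_{i\in I}\{L_i/j : j\in\mathbb N,\ f_l(i)\le j\le f_u(i)\}$, where each pair $(i,j)$ contributes one occurrence. A triple $(I,f_l,f_u)$ satisfying (i)–(iii) is called an admissible restriction. *)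

From HB Require Import structures.
From mathcomp Require Import all_boot all_order all_algebra.
Set Implicit Arguments. Unset Strict Implicit. Unset Printing Implicit Defensive.
Import Order.TTheory GRing.Theory Num.Theory.
Local Open Scope ring_scope.

(* The multiset L = {L_1..L_n} is given as a family L : 'I_n -> rat. *)

Definition mcount (n : nat) (L : 'I_n -> rat) (l : rat) : int :=
  \sum_(i < n) Num.floor (L i / l).

Definition ccost (n : nat) (L : 'I_n -> rat) (l : rat) : int :=
  \sum_(i < n) (Num.ceil (L i / l) - 1).

Definition feasible (n : nat) (L : 'I_n -> rat) (k : nat) (l : rat) : Prop :=
  0 < l /\ (k%:Z <= mcount L l).

Definition optimal_cut (n : nat) (L : 'I_n -> rat) (k : nat) (l : rat) : Prop :=
  feasible L k l /\ forall l', feasible L k l' -> ccost L l <= ccost L l'.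

Definition in_candidates (n : nat) (L : 'I_n -> rat) (I : {set 'I_n})
    (fl fu : 'I_n -> nat) (x : rat) : Prop :=
  exists2 i, i \in I &
    exists j : nat, [/\ (fl i <= j)%N, (j <= fu i)%N & x = L i / j%:R].

From HB Require Import structures.
From mathcomp Require Import all_boot all_order all_algebra.
From mathcomp Require Import zify.
Set Implicit Arguments. Unset Strict Implicit. Unset Printing Implicit Defensive.
Import Order.TTheory GRing.Theory Num.Theory.
Local Open Scope ring_scope.

(* The optimal cut length is the largest feasible length: raising a feasible
   length to the next breakpoint L_i / j keeps it feasible, while raising it
   past a breakpoint strictly lowers the cost c.  Hence l* is a breakpoint
   L_i / j.  Lengths L_i' with i' outside I are feasible and distinct from l*,
   so i lies in I, and the bounds (i), (ii) squeeze j into [f_l(i), f_u(i)]. *)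

Lemma ler_pdiv2l (R : realFieldType) (x a b : R) :
  0 < x -> 0 < a -> 0 < b -> (x / a <= x / b) = (b <= a).
Proof. by move=> x_gt0 a_gt0 b_gt0; rewrite ler_pM2l // lef_pV2 ?posrE. Qed.

Section CutLengths.

Variables (n : nat) (L : 'I_n -> rat) (k : nat).
Hypothesis L_gt0 : forall i, 0 < L i.

Lemma mcount_le (l l' : rat) : 0 < l -> l <= l' -> mcount L l' <= mcount L l.
Proof.
move=> l_gt0 le_ll'; apply: ler_sum => i _; apply: le_floor.
by rewrite ler_pdiv2l // (lt_le_trans l_gt0).
Qed.

Lemma feasible_le (l l' : rat) : 0 < l -> l <= l' -> feasible L k l' -> feasible L k l.
Proof.
by move=> l_gt0 le_ll' [_ feas']; split=> //; apply: le_trans feas' _; exact: mcount_le.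
Qed.

Lemma mcount_gt0_floor (l : rat) : 0 < mcount L l -> exists i, 0 < Num.floor (L i / l).
Proof.
move=> m_gt0; apply/existsP; apply: contraTT m_gt0; rewrite negb_exists -leNgt.
by move=> /forallP floor_le0; apply: sumr_le0 => i _; rewrite leNgt floor_le0.
Qed.

(* The breakpoint is L_i / floor(L_i / l) for an index i minimizing it among
   those with a positive count: every count floor(L_a / l) survives the raise. *)
Lemma feasible_breakpoint (l : rat) : (0 < k)%N -> feasible L k l ->
  exists i (j : nat), [/\ (0 < j)%N, l <= L i / j%:R & feasible L k (L i / j%:R)].
Proof.
move=> k_gt0 [l_gt0 feas].
pose P i := 0 < Num.floor (L i / l).
pose brk i := L i / (Num.floor (L i / l))%:~R.
have [i0 Pi0] : exists i0, P i0.
  by apply: mcount_gt0_floor; apply: lt_le_trans feas; rewrite ltz_nat.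
have [i Pi brk_min] := @arg_minP _ _ _ i0 P brk Pi0.
have cnt_gt0 : 0 < (Num.floor (L i / l))%:~R :> rat by rewrite ltr0z.
have brk_gt0 : 0 < brk i by rewrite divr_gt0.
have le_l_brk : l <= brk i by rewrite ler_pdivlMr // mulrC -ler_pdivlMr // floor_le.
have count_kept a : Num.floor (L a / l) <= Num.floor (L a / brk i).
  have [Pa | nPa] := boolP (P a); last first.
    apply: le_trans (_ : 0 <= _); first by rewrite leNgt.
    by rewrite floor_ge0 divr_ge0 // ltW.
  have cnt_a_gt0 : 0 < (Num.floor (L a / l))%:~R :> rat by rewrite ltr0z.
  rewrite floor_ge_int ler_pdivlMr //.
  apply: le_trans (_ : _ <= (Num.floor (L a / l))%:~R * brk a) _.
    by rewrite ler_pM2l // brk_min.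
  by rewrite /brk mulrC divfK ?gt_eqF.
have cnt_ge0 := ltW Pi.
exists i, `|Num.floor (L i / l)|%N.
have -> : (`|Num.floor (L i / l)|%N%:R : rat) = (Num.floor (L i / l))%:~R.
  by rewrite -[in RHS](gez0_abs cnt_ge0).
split=> //.
- by rewrite -ltz_nat gez0_abs.
- by split=> //; apply: le_trans feas _; exact: ler_sum.
Qed.

(* Only the term of index a drops: L_a / (L_a / j) = j has ceiling j,
   against ceiling > j at the smaller length l. *)
Lemma ccost_lt_breakpoint (l : rat) (a : 'I_n) (j : nat) :
  0 < l -> (0 < j)%N -> l < L a / j%:R -> ccost L (L a / j%:R) < ccost L l.
Proof.
move=> l_gt0 j_gt0 lt_l_brk.
have jR_gt0 : 0 < j%:R :> rat by rewrite ltr0n.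
rewrite /ccost (bigD1 a) //= [X in _ < X](bigD1 a) //=; apply: ltr_leD.
- have -> : L a / (L a / j%:R) = (j%:Z)%:~R.
    by rewrite invf_div mulrCA divff ?mulr1 ?gt_eqF.
  rewrite intrKceil ltrD2r ltNge ceil_le_int -ltNge.
  by rewrite ltr_pdivlMr // -[(j%:Z)%:~R]/(j%:R : rat) mulrC -ltr_pdivlMr.
- apply: ler_sum => i _; rewrite lerD2r; apply: le_ceil.
  by rewrite ler_pdiv2l ?divr_gt0 // ltW.
Qed.

Section Optimal.

Hypothesis k_gt0 : (0 < k)%N.
Variable lstar : rat.
Hypothesis lstar_opt : optimal_cut L k lstar.

Lemma optimal_cut_max (l : rat) : feasible L k l -> l <= lstar.
Proof.
move=> feas; have [lstar_gt0 _] := lstar_opt.1.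
have [a [j [j_gt0 le_l_brk feas_brk]]] := feasible_breakpoint k_gt0 feas.
rewrite leNgt; apply/negP => lt_lstar_l.
have := ccost_lt_breakpoint lstar_gt0 j_gt0 (lt_le_trans lt_lstar_l le_l_brk).
by rewrite ltNge (lstar_opt.2 _ feas_brk).
Qed.

Lemma optimal_cut_breakpoint :
  exists i (j : nat), (0 < j)%N /\ lstar = L i / j%:R.
Proof.
have [i [j [j_gt0 le_lstar_brk feas_brk]]] := feasible_breakpoint k_gt0 lstar_opt.1.
by exists i, j; split=> //; apply/eqP; rewrite eq_le le_lstar_brk (optimal_cut_max feas_brk).
Qed.

End Optimal.

End CutLengths.

Theorem mainTheorem5 (n : nat) (L : 'I_n -> rat) (k : nat)
    (I : {set 'I_n}) (fl fu : 'I_n -> nat) (lstar : rat) :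
  (forall i, 0 < L i) ->
  (0 < k)%N ->
  (forall i, i \in I -> (0 < fl i)%N /\ (0 < fu i)%N) ->
  optimal_cut L k lstar ->
  (forall i, i \in I -> fl i = 1%N \/ ~ feasible L k (L i / (fl i - 1)%:R)) ->
  (forall i, i \in I -> feasible L k (L i / (fu i)%:R)) ->
  (forall i, i \notin I -> feasible L k (L i) /\ L i <> lstar) ->
  in_candidates L I fl fu lstar.
Proof.
move=> L_gt0 k_gt0 f_gt0 opt fl_min fu_feas outside_I.
have lstar_max := optimal_cut_max L_gt0 k_gt0 opt.
have [i [j [j_gt0 lstar_eq]]] := optimal_cut_breakpoint L_gt0 k_gt0 opt.
have [iI | iNI] := boolP (i \in I); last first.
  have [feas_i ne_i] := outside_I i iNI; exfalso; apply: ne_i.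
  apply/eqP; rewrite eq_le lstar_max // lstar_eq.
  by rewrite -[X in _ <= X]divr1 ler_pdiv2l ?ler1n ?ltr0n.
exists i => //; exists j; split=> //.
- have [-> // | infeas] := fl_min i iI.
  rewrite leqNgt; apply/negP => lt_j_fl; apply: infeas.
  have fl1_gt0 : (0 < fl i - 1)%N by lia.
  apply: (feasible_le L_gt0 _ _ opt.1); first by rewrite divr_gt0 ?ltr0n.
  by rewrite lstar_eq ler_pdiv2l ?ltr0n // ler_nat; lia.
- have := lstar_max _ (fu_feas i iI).
  by rewrite lstar_eq ler_pdiv2l ?ltr0n ?ler_nat // (f_gt0 i iI).2.
Qed.
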